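(* Let $p,q\in(0,1/2)$ and let $S_1(x)=px$, $S_2(x)=qx$, $S_3(x)=px+1-p$, $S_4(x)=qx+1-q$. Let $K$ be the attractor of $\{S_1,S_2,S_3,S_4\}$ and $A=S_3(K)\cup S_4(K)$. Suppose that for all $m,n\in\mathbb N$, $S_1^m(A)\cap S_2^n(A)=\varnothing$. Then (i) $K=\{0\}\cup\bigcup_{m,n=0}^{\infty}S_1^mS_2^n(A)$, where the sets $S_1^mS_2^n(A)$, $(m,n)\in(\mathbb N\cup\{0\})^2$, are pairwise disjoint (and do not contain $0$); (ii) for any $m,n\in\mathbb N\cup\{0\}$, $S_1^m(K)\cap S_2^n(K)=S_1^mS_2^n(K)$.
   Context: The attractor of a finite system of contractions $\{S_1,\dots,S_m\}$ of $\mathbb R$ is the unique nonempty compact set $K$ with $K=\bigcup_i S_i(K)$. *)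

From HB Require Import structures.
From mathcomp Require Import all_boot all_order all_algebra.
From mathcomp Require Import all_classical all_reals all_analysis.
Set Implicit Arguments. Unset Strict Implicit. Unset Printing Implicit Defensive.
Import Order.TTheory GRing.Theory Num.Theory numFieldNormedType.Exports.
Local Open Scope classical_set_scope.
Local Open Scope ring_scope.

(* The attractor of the finite IFS given by the list Ss of maps R -> R:
   the nonempty compact set K with K = \bigcup_i S_i(K).  (The attractor is
   unique for a system of contractions, so any set with this property is
   "the" attractor.) *)
Definition is_attractor (R : realType) (Ss : seq (R -> R)) (K : set R) : Prop :=
  K !=set0 /\ compact K /\
  K = \bigcup_(i in [set i : nat | (i < size Ss)%N]) (nth id Ss i @` K).

From HB Require Import structures.
From mathcomp Require Import all_boot all_order all_algebra.
From mathcomp Require Import all_classical all_reals all_analysis.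
From mathcomp Require Import lra ring.
Import Order.TTheory GRing.Theory Num.Theory numFieldNormedType.Exports.
Local Open Scope classical_set_scope.
Local Open Scope ring_scope.

Set Implicit Arguments.
Unset Strict Implicit.

(* The self-similarity of K forces K ⊆ [0, 1], hence A ⊆ (1/2, 1], and 0 ∈ K
   as a limit of p^n x. A positive x ∈ K lies in A or is p y or q y with
   y ∈ K and y > 2 x; iterating, x = p^m q^n a with a ∈ A. The pair (m, n) is
   unique: after cancelling common powers, an identity a = p^i q^j a' with
   (i, j) ≠ (0, 0) is impossible because the right side is at most 1/2, and
   p^i a = q^j a' with i, j > 0 is excluded by hypothesis. Both parts of the
   proposition follow from this unique coding of K \ {0}. *)

Lemma exists_expr2_gt (R : archiRealFieldType) (t : R) : exists N, t < 2 ^+ N.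
Proof.
exists (Num.Def.truncn t).+1; apply: lt_le_trans (truncnS_gt t) _.
by rewrite -natrX ler_nat ltnW // ltn_expl.
Qed.

Lemma mulrX_invariant (R : pzSemiRingType) (S : set R) (c y : R) k :
  (forall z, S z -> S (c * z)) -> S y -> S (c ^+ k * y).
Proof.
move=> Sc Sy; elim: k => [|k IH]; first by rewrite mul1r.
by rewrite exprS -mulrA; apply: Sc.
Qed.

Definition ifs_step (R : realType) (p q x y : R) : Prop :=
  [\/ x = p * y, x = q * y, x = p * y + 1 - p | x = q * y + 1 - q].

Lemma ifs_step_reflect (R : realType) (p q x y : R) :
  ifs_step p q x y -> ifs_step p q (1 - x) (1 - y).
Proof.
by case=> ->; [constructor 3 | constructor 4 | constructor 1 | constructor 2];
  ring.
Qed.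

Lemma is_attractor_ifs_step (R : realType) (p q : R) (K : set R) :
  is_attractor [:: fun x => p * x; fun x => q * x;
                   fun x => p * x + 1 - p; fun x => q * x + 1 - q] K ->
  forall x, K x <-> exists2 y, K y & ifs_step p q x y.
Proof.
move=> [_ [_ KE]] x; rewrite {1}KE; split.
  case=> -[|[|[|[|i]]]] //= _ [y Ky <-]; exists y => //.
  - by constructor 1.
  - by constructor 2.
  - by constructor 3.
  - by constructor 4.
by move=> [y Ky [] ->]; [exists 0%N | exists 1%N | exists 2%N | exists 3%N];
  rewrite //=; exists y.
Qed.

Section SelfSimilarSet.
Variables (R : realType) (p q : R).
Hypotheses (p_gt0 : 0 < p) (p_lt_half : p < 2^-1).
Hypotheses (q_gt0 : 0 < q) (q_lt_half : q < 2^-1).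
(* lra and nra ignore section hypotheses: proofs copy the bounds they need
   into the local context. *)

(* If inf L < 0, every element of L would be at least (inf L) / 2. *)
Lemma ifs_invariant_ge0 (L : set R) :
  L !=set0 -> has_lbound L ->
  (forall x, L x -> exists2 y, L y & ifs_step p q x y) ->
  forall x, L x -> 0 <= x.
Proof.
move=> L_neq0 L_lb L_step x Lx; apply: le_trans (ge_inf L_lb Lx).
rewrite leNgt; apply/negP => inf_lt0.
suff : inf L / 2 <= inf L by lra.
have scaled_ge (c y : R) :
    0 < c -> c < 2^-1 -> inf L <= y -> inf L / 2 <= c * y.
  by move=> c_gt0 c_lt y_ge; nra.
apply: lb_le_inf => // z /L_step[y /(ge_inf L_lb) y_ge zy].
have py := scaled_ge p y p_gt0 p_lt_half y_ge.
have qy := scaled_ge q y q_gt0 q_lt_half y_ge.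
move: (p_lt_half) (q_lt_half) => p1 q1.
by case: zy => ->; lra.
Qed.

Variable K : set R.
Hypotheses (K_compact : compact K) (K_neq0 : K !=set0).
Hypothesis K_fixed : forall x, K x <-> exists2 y, K y & ifs_step p q x y.

Let K_norm_le : exists M : R, forall x, K x -> `|x| <= M.
Proof.
have [M [_ KM]] := compact_bounded K_compact.
by exists (M + 1); apply: KM; rewrite ltrDl.
Qed.

Lemma K_ge0 x : K x -> 0 <= x.
Proof.
move=> Kx; apply: (ifs_invariant_ge0 K_neq0 _ (fun z => proj1 (K_fixed z)) Kx).
have [M KM] := K_norm_le.
by exists (- M) => y /KM; rewrite ler_norml => /andP[].
Qed.

(* x |-> 1 - x conjugates the system to itself. *)
Lemma K_le1 x : K x -> x <= 1.
Proof.
move=> Kx; rewrite -subr_ge0.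
apply: (@ifs_invariant_ge0 ((fun y => 1 - y) @` K)); last by exists x.
- by have [y Ky] := K_neq0; exists (1 - y), y.
- have [M KM] := K_norm_le; exists (1 - M) => _ [y /KM + <-].
  by rewrite ler_norml => /andP[_ yM]; lra.
- move=> _ [y /K_fixed[z Kz yz] <-].
  by exists (1 - z); [exists z | exact: ifs_step_reflect].
Qed.

Lemma K_mulp y : K y -> K (p * y).
Proof. by move=> Ky; apply/K_fixed; exists y => //; constructor 1. Qed.

Lemma K_mulq y : K y -> K (q * y).
Proof. by move=> Ky; apply/K_fixed; exists y => //; constructor 2. Qed.

Lemma K_scale m n y : K y -> K (p ^+ m * (q ^+ n * y)).
Proof.
by move=> Ky; apply: mulrX_invariant K_mulp _; apply: mulrX_invariant K_mulq Ky.
Qed.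

Lemma K_has0 : K 0.
Proof.
have [x Kx] := K_neq0.
apply: (@closed_cvg _ _ \oo _ (fun n => p ^+ n * x)).
- exact: compact_closed (@Rhausdorff R) K_compact.
- by apply: nearW => n; apply: mulrX_invariant K_mulp Kx.
- rewrite -(mul0r x); apply: cvgM; last exact: cvg_cst.
  apply: cvg_expr; rewrite gtr0_norm //.
  by rewrite (lt_trans p_lt_half) // invf_lt1 ?ltr1n.
Qed.

Let A := ((fun x => p * x + 1 - p) @` K) `|` ((fun x => q * x + 1 - q) @` K).

Lemma A_sub_K : A `<=` K.
Proof.
by move=> _ [] [y Ky <-]; apply/K_fixed; exists y => //;
  [constructor 3 | constructor 4].
Qed.

Lemma A_gt_half a : A a -> 2^-1 < a.
Proof.
move: (p_gt0) (p_lt_half) (q_gt0) (q_lt_half) => p0 p1 q0 q1.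
by move=> [] [y /K_ge0 y_ge0 <-]; nra.
Qed.

Lemma K_decomp x : K x -> 0 < x ->
  exists m n, exists2 a, A a & x = p ^+ m * (q ^+ n * a).
Proof.
move=> Kx x_gt0; have [N] := exists_expr2_gt x^-1.
rewrite -[x^-1]div1r ltr_pdivrMr //.
elim: N x Kx x_gt0 => [|N IH] x Kx x_gt0 Nx.
  by have := K_le1 Kx; rewrite expr0 mul1r in Nx; lra.
have two_pow_gt0 : 0 < 2 ^+ N :> R by rewrite exprn_gt0.
(* dividing by a ratio c < 1/2 at least doubles x *)
have shrink c y : 0 < c -> c < 2^-1 -> x = c * y -> 0 < y /\ 1 < 2 ^+ N * y.
  by move=> c_gt0 c_lt xy; rewrite exprS in Nx; split; nra.
case/K_fixed: Kx => y Ky [] xy.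
- have [y_gt0 Ny] := shrink p y p_gt0 p_lt_half xy.
  have [m [n [a Aa ya]]] := IH y Ky y_gt0 Ny.
  by exists m.+1, n, a => //; rewrite xy ya exprS; ring.
- have [y_gt0 Ny] := shrink q y q_gt0 q_lt_half xy.
  have [m [n [a Aa ya]]] := IH y Ky y_gt0 Ny.
  by exists m, n.+1, a => //; rewrite xy ya exprS; ring.
- by exists 0%N, 0%N, x; rewrite ?mul1r //; left; exists y.
- by exists 0%N, 0%N, x; rewrite ?mul1r //; right; exists y.
Qed.

(* p^i q^j a' lies in K, so it is at most 1, and a nontrivial factor p or q
   brings it below 1/2 < a. *)
Lemma A_scaled_eq i j a a' : A a -> A a' ->
  a = p ^+ i * (q ^+ j * a') -> (i = 0 /\ j = 0)%N.
Proof.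
move: (p_gt0) (p_lt_half) (q_gt0) (q_lt_half) => p0 p1 q0 q1.
move=> /A_gt_half a_gt /A_sub_K Ka'; case: i => [|i]; last first.
  rewrite exprS -mulrA => E; have z_le1 := K_le1 (@K_scale i j a' Ka').
  by exfalso; nra.
rewrite mul1r; case: j => [//|j]; rewrite exprS -mulrA => E.
have := K_le1 (@K_scale 0 j a' Ka'); rewrite mul1r => z_le1.
by exfalso; nra.
Qed.

Hypothesis A_disjoint : forall i j a a', (0 < i)%N -> (0 < j)%N ->
  A a -> A a' -> p ^+ i * a <> q ^+ j * a'.

Lemma scale_pq_inj m n : injective (fun x => p ^+ m * (q ^+ n * x)).
Proof.
have [pm qn] : p ^+ m != 0 /\ q ^+ n != 0 by rewrite !expf_neq0 ?lt0r_neq0.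
by move=> x y /(mulfI pm) /(mulfI qn).
Qed.

Lemma coding_unique m n m' n' a a' : A a -> A a' ->
  p ^+ m * (q ^+ n * a) = p ^+ m' * (q ^+ n' * a') -> m = m' /\ n = n'.
Proof.
wlog le_mm' : m n m' n' a a' / (m <= m')%N.
  move=> wlog Aa Aa' E; have [le|/ltnW le] := leqP m m'.
    exact: wlog le Aa Aa' E.
  by have [-> ->] := wlog _ _ _ _ _ _ le Aa' Aa (esym E).
move=> Aa Aa'; rewrite -(subnKC le_mm'); move: (m' - m)%N => i E.
have [le_nn'|lt_n'n] := leqP n n'.
  move: E; rewrite -(subnKC le_nn'); move: (n' - n)%N => j E.
  have /scale_pq_inj/(A_scaled_eq Aa Aa')[-> ->] :
      p ^+ m * (q ^+ n * a) = p ^+ m * (q ^+ n * (p ^+ i * (q ^+ j * a'))).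
    by rewrite E !exprD; ring.
  by rewrite !addn0.
move: E; rewrite -(subnKC (ltnW lt_n'n)).
have : (0 < n - n')%N by rewrite subn_gt0.
move: (n - n')%N => j j_gt0 E.
have /scale_pq_inj E' :
    p ^+ m * (q ^+ n' * (q ^+ j * a)) = p ^+ m * (q ^+ n' * (p ^+ i * a')).
  transitivity (p ^+ m * (q ^+ (n' + j) * a)); first by rewrite exprD; ring.
  by rewrite E exprD; ring.
case: i E' {E} => [|i] E'; last by case: (A_disjoint (ltn0Sn i) j_gt0 Aa' Aa).
have [_ j0] : (0 = 0 /\ j = 0)%N.
  by apply: (A_scaled_eq Aa' Aa); rewrite E' !expr0 !mul1r.
by rewrite j0 in j_gt0.
Qed.

Let cell m n := iter m ( *%R p) @` (iter n ( *%R q) @` A).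

Lemma cellP m n x :
  cell m n x <-> exists2 a, A a & x = p ^+ m * (q ^+ n * a).
Proof.
split=> [[_ [a Aa <-] <-]|[a Aa ->]]; first by exists a; rewrite ?iter_mulr.
by exists (q ^+ n * a); [exists a | ]; rewrite ?iter_mulr.
Qed.

Lemma K_partition :
  K = [set 0] `|` \bigcup_(mn in [set: nat * nat]) cell mn.1 mn.2.
Proof.
apply/seteqP; split=> [x Kx|x [->|[[m n] _ /cellP[a Aa ->]]]].
- have := K_ge0 Kx; rewrite le0r => /orP[/eqP->|x_gt0]; first by left.
  have [m [n [a Aa ->]]] := K_decomp Kx x_gt0.
  by right; exists (m, n) => //; apply/cellP; exists a.
- exact: K_has0.
- exact/K_scale/A_sub_K.
Qed.

Lemma cells_disjoint m n m' n' :
  (m, n) <> (m', n') -> cell m n `&` cell m' n' = set0.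
Proof.
move=> neq; apply/seteqP; split=> // x [/cellP[a Aa ->] /cellP[a' Aa' E]].
by have [mm' nn'] := coding_unique Aa' Aa (esym E); case: neq; rewrite mm' nn'.
Qed.

Lemma cell_neq0 m n : ~ cell m n 0.
Proof.
move=> /cellP[a /A_gt_half a_gt E].
have : 0 < p ^+ m * (q ^+ n * a) by rewrite !mulr_gt0 ?exprn_gt0 //; lra.
by rewrite -E ltxx.
Qed.

Lemma K_scaled_meet m n :
  (iter m ( *%R p) @` K) `&` (iter n ( *%R q) @` K)
  = iter m ( *%R p) @` (iter n ( *%R q) @` K).
Proof.
apply/seteqP; split=> [_ [[k Kk <-] [k' Kk' E]]|_ [_ [k Kk <-] <-]]; last first.
  rewrite !iter_mulr; split.
    exists (q ^+ n * k); last by rewrite iter_mulr.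
    exact: mulrX_invariant K_mulq Kk.
  exists (p ^+ m * k); last by rewrite iter_mulr mulrCA.
  exact: mulrX_invariant K_mulp Kk.
rewrite !iter_mulr in E *.
have := K_ge0 Kk; rewrite le0r => /orP[/eqP k0|k_gt0].
  exists 0; first by exists 0; rewrite ?iter_mulr ?mulr0 //; apply: K_has0.
  by rewrite iter_mulr k0 !mulr0.
have k'_gt0 : 0 < k'.
  have : 0 < q ^+ n * k' by rewrite E mulr_gt0 ?exprn_gt0.
  by rewrite pmulr_rgt0 ?exprn_gt0.
have [a [b [al Aal Ek]]] := K_decomp Kk k_gt0.
have [c [d [be Abe Ek']]] := K_decomp Kk' k'_gt0.
have [_ bnd] : (m + a = c /\ b = n + d)%N.
  apply: coding_unique Aal Abe _.
  transitivity (p ^+ m * k); first by rewrite Ek exprD; ring.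
  by rewrite -E Ek' exprD; ring.
exists (q ^+ n * (p ^+ a * (q ^+ d * al))).
  exists (p ^+ a * (q ^+ d * al)); last by rewrite iter_mulr.
  exact/K_scale/A_sub_K.
by rewrite iter_mulr Ek bnd !exprD; ring.
Qed.

End SelfSimilarSet.

Unset Implicit Arguments.

Theorem proposition2 (R : realType) (p q : R) (K : set R) :
  0 < p < 2^-1 -> 0 < q < 2^-1 ->
  let S1 := fun x : R => p * x in
  let S2 := fun x : R => q * x in
  let S3 := fun x : R => p * x + 1 - p in
  let S4 := fun x : R => q * x + 1 - q in
  is_attractor [:: S1; S2; S3; S4] K ->
  let A := (S3 @` K) `|` (S4 @` K) in
  (forall m n : nat, (0 < m)%N -> (0 < n)%N ->
     (iter m S1 @` A) `&` (iter n S2 @` A) = set0) ->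
  (* (i) *)
  (K = [set 0] `|` \bigcup_(mn in [set: nat * nat])
                     (iter mn.1 S1 @` (iter mn.2 S2 @` A))
   /\ (forall m n m' n' : nat, (m, n) <> (m', n') ->
         (iter m S1 @` (iter n S2 @` A)) `&` (iter m' S1 @` (iter n' S2 @` A))
         = set0)
   /\ (forall m n : nat, ~ (iter m S1 @` (iter n S2 @` A)) 0))
  /\
  (* (ii) *)
  (forall m n : nat,
     (iter m S1 @` K) `&` (iter n S2 @` K) = iter m S1 @` (iter n S2 @` K)).
Proof.
move=> /andP[p_gt0 p_lt] /andP[q_gt0 q_lt] S1 S2 S3 S4 attrK A disjA.
have [K_neq0 [K_compact _]] := attrK.
have K_fixed := is_attractor_ifs_step attrK.
have A_disjoint i j a a' : (0 < i)%N -> (0 < j)%N ->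
    A a -> A a' -> p ^+ i * a <> q ^+ j * a'.
  move=> i_gt0 j_gt0 Aa Aa' E; have /seteqP[+ _] := disjA i j i_gt0 j_gt0.
  by apply; split; [exists a | exists a']; rewrite ?iter_mulr.
split; [split; [|split] |].
- exact: (K_partition p_gt0 p_lt q_gt0 q_lt K_compact K_neq0 K_fixed).
- exact: (cells_disjoint p_gt0 p_lt q_gt0 q_lt K_compact K_neq0 K_fixed
            A_disjoint).
- exact: (cell_neq0 p_gt0 p_lt q_gt0 q_lt K_compact K_neq0 K_fixed).
- exact: (K_scaled_meet p_gt0 p_lt q_gt0 q_lt K_compact K_neq0 K_fixed
            A_disjoint).
Qed.
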